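(* Let $F=\breve F(\alpha_1,\dots,\alpha_t)$ be a fence with shared elements $s_1,\dots,s_{t-1}$. Then the set $X=\{\chi_{s_i}: 1\le i\le t-1\}$ is linearly independent and $\operatorname{Span}_{\mathbb R}(X)\cap A_T(F)=\{0\}$.
   Context: Fences: let $\alpha=(\alpha_1,\dots,\alpha_t)$ be positive integers with $t\ge2$ and $\alpha_1,\alpha_t\ge2$. Put $a_0=0$, $a_i=\alpha_1+\dots+\alpha_i$, $n=a_t-1$. The fence $\breve F(\alpha)$ is the poset on $\{x_1,\dots,x_n\}$ whose cover relations are: for $1\le j\le n-1$ with $a_{i-1}\le j<a_i$, $x_j\lessdot x_{j+1}$ if $i$ is odd and $x_j\gtrdot x_{j+1}$ if $i$ is even. The shared elements are $s_i=x_{a_i}$, $i\in[t-1]$. $\mathcal J(F)$ is the set of order ideals. For $q\in F$, $I\in\mathcal J(F)$: $\chi_q(I)=1$ if $q\in\max(I)$, else $0$; $T_q(I)=1$ if $q\in\min(F\setminus I)$, $-1$ if $q\in\max(I)$, $0$ otherwise. For $f:\mathcal J(F)\to\mathbb R$, write $f\equiv\text{const}$ if $f=c+\sum_{q\in F}c_qT_q$ for some real constants $c,c_q$. The antichain toggleability space is $A_T(F)=\{f\in\operatorname{Span}_{\mathbb R}\{\chi_q:q\in F\}: f\equiv\text{const}\}$. *)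

From HB Require Import structures.
From mathcomp Require Import all_boot all_order all_algebra.
From mathcomp Require Import reals.
Set Implicit Arguments. Unset Strict Implicit. Unset Printing Implicit Defensive.
Import Order.TTheory GRing.Theory Num.Theory.

Section Fence.
Variable alpha : seq nat.

(* t = size alpha, alpha_i = nth 0 alpha (i-1) *)
Definition tlen : nat := size alpha.
Definition apart (k : nat) : nat := \sum_(l < k) nth 0 alpha l.
(* n = a_t - 1 ; the fence elements x_1..x_n are the ordinals 0..n-1
   (ordinal u stands for x_{u+1}) *)
Definition fn : nat := (apart tlen).-1.

(* segment index i of a 1-based position j with a_{i-1} <= j < a_i *)
Definition seg (j : nat) : nat := (count (fun k => apart k <= j) (iota 1 tlen)).+1.
(* x_j <. x_{j+1} iff the segment index of j is odd *)
Definition up (j : nat) : bool := odd (seg j).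

Definition cov : rel 'I_fn := fun x y =>
  ((val y == (val x).+1) && up (val x).+1) ||
  ((val x == (val y).+1) && ~~ up (val y).+1).

Definition fle (x y : 'I_fn) : bool := connect cov x y.
Definition flt (x y : 'I_fn) : bool := (x != y) && fle x y.

Definition is_ideal (I : {set 'I_fn}) : Prop :=
  forall x y, y \in I -> fle x y -> x \in I.

Definition in_max (I : {set 'I_fn}) (q : 'I_fn) : bool :=
  (q \in I) && [forall r, (r \in I) ==> ~~ flt q r].
Definition in_min_compl (I : {set 'I_fn}) (q : 'I_fn) : bool :=
  (q \notin I) && [forall r, (r \notin I) ==> ~~ flt r q].

Definition shared (q : 'I_fn) : bool :=
  has (fun i => (val q).+1 == apart i) (iota 1 tlen.-1).

Variable R : realType.
Local Open Scope ring_scope.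

Definition chi (q : 'I_fn) (I : {set 'I_fn}) : R :=
  if in_max I q then 1 else 0.
Definition Tog (q : 'I_fn) (I : {set 'I_fn}) : R :=
  if in_min_compl I q then 1 else if in_max I q then -1 else 0.

(* functions J(F) -> R are represented by {set 'I_fn} -> R, compared only on ideals *)
Definition toggle_const (f : {set 'I_fn} -> R) : Prop :=
  exists (c : R) (cq : 'I_fn -> R), forall I, is_ideal I ->
    f I = c + \sum_q cq q * Tog q I.

Definition in_span_chi (f : {set 'I_fn} -> R) : Prop :=
  exists b : 'I_fn -> R, forall I, is_ideal I -> f I = \sum_q b q * chi q I.

Definition in_AT (f : {set 'I_fn} -> R) : Prop := in_span_chi f /\ toggle_const f.

Definition in_span_X (f : {set 'I_fn} -> R) : Prop :=
  exists b : 'I_fn -> R, forall I, is_ideal I ->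
    f I = \sum_(q | shared q) b q * chi q I.

Definition X_lin_indep : Prop :=
  forall b : 'I_fn -> R,
    (forall I, is_ideal I -> \sum_(q | shared q) b q * chi q I = 0) ->
    forall q, shared q -> b q = 0.

Definition is_fence_comp : Prop :=
  [/\ (2 <= tlen)%N, all (fun a => 0 < a)%N alpha, (2 <= head 0 alpha)%N & (2 <= last 0 alpha)%N].

End Fence.

From HB Require Import structures.
From mathcomp Require Import all_boot all_order all_algebra.
From mathcomp Require Import reals.
From mathcomp Require Import zify ring lra.
Import Order.TTheory GRing.Theory Num.Theory.
Set Implicit Arguments. Unset Strict Implicit. Unset Printing Implicit Defensive.

(* Let f = sum_{shared q} b_q chi_q = c + sum_q c_q T_q on J(F).  Each chi_r and
   T_r only sees the intersection of an ideal with r and its two neighbours, so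
   on a rectangle of ideals L_i :|: R_j split at m (L_i left of m, R_j right of
   m) the mixed second difference of the identity kills every term except those
   at m.  At a shared peak m (covering u1 and u2) the rectangle
   {set0, down u1} x {set0, down u2} gives c_m = 0; at a shared valley the
   rectangle {sdown u1, down u1} x {sdown u2, down u2} gives b_m = - c_m.
   Comparing f on down q and sdown q, and using the valley relation, gives
   [q shared] b_q + 2 c_q = sum of c_r over the non-shared neighbours r of q.
   Hence the coefficients c_r of non-shared r, extended by 0, have vanishing
   discrete Laplacian wherever they are nonzero, and the Dirichlet energy
   identity forces them to vanish.  At valleys the relation then reads
   c_m = 0 too, f(set0) = 0 gives c = 0, so f = 0; linear independence of the
   chi_{s_i} is read off from f(down q) = b_q. *)

Section FenceOrder.
Variable alpha : seq nat.
Local Notation T := 'I_(fn alpha).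
Local Notation up := (up alpha).
Implicit Types (a b p q r x y z : T) (I J : {set T}).

Lemma covE x y : cov x y =
  ((y == x.+1 :> nat) && up x.+1) || ((x == y.+1 :> nat) && ~~ up y.+1).
Proof. by []. Qed.

Definition adjacent x y := (x == y.+1 :> nat) || (y == x.+1 :> nat).

Lemma adjacent_sym : symmetric adjacent.
Proof. by move=> x y; rewrite /adjacent orbC. Qed.

Lemma cov_adjacent x y : cov x y -> adjacent x y.
Proof. by rewrite covE /adjacent => /orP[]/andP[-> _]; rewrite ?orbT. Qed.

Lemma lower_cov_adjacent x y : cov y x -> adjacent x y.
Proof. by rewrite adjacent_sym; apply: cov_adjacent. Qed.

Lemma adjacent_cov x y : adjacent x y -> cov x y || cov y x.
Proof.
rewrite /adjacent !covE => /orP[]/eqP->; rewrite eqxx /=;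
  [case: (up y.+1) | case: (up x.+1)]; by rewrite /= ?orbT.
Qed.

Lemma cov_neq x y : cov x y -> x != y.
Proof. by move/cov_adjacent; apply: contraTneq => ->; rewrite /adjacent; lia. Qed.

Lemma cov_asym x y : cov x y -> ~~ cov y x.
Proof.
rewrite !covE => /orP[]/andP[/eqP-> u]; rewrite eqxx ltn_eqF //=.
  by rewrite u.
by rewrite (negbTE u).
Qed.

Lemma cov_consecutive x y : y = x.+1 :> nat -> cov x y = up y /\ cov y x = ~~ up y.
Proof. by move=> yx; rewrite !covE yx eqxx ltn_eqF ?gtn_eqF //= orbF. Qed.

Lemma neighbours_lt r u1 u2 : adjacent r u1 -> adjacent r u2 -> u1 < u2 ->
  u1.+1 = r :> nat /\ u2 = r.+1 :> nat.
Proof. by rewrite /adjacent; lia. Qed.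

Lemma adjacent_neighbours r u1 u2 z : adjacent r u1 -> adjacent r u2 -> u1 < u2 ->
  adjacent r z -> (z == u1) || (z == u2).
Proof. by rewrite /adjacent -!(inj_eq (@ord_inj _)); lia. Qed.

Lemma lower_covers_two r u1 u2 (P : pred T) : cov u1 r -> cov u2 r -> u1 < u2 ->
  [forall p, cov p r ==> P p] = P u1 && P u2.
Proof.
move=> c1 c2 u12; apply/forallP/andP => [h|[P1 P2] p].
  by split; [move: (h u1); rewrite c1 | move: (h u2); rewrite c2].
apply/implyP => cpr.
have := adjacent_neighbours (lower_cov_adjacent c1) (lower_cov_adjacent c2) u12
  (lower_cov_adjacent cpr).
by case/orP=> /eqP->.
Qed.

Lemma upper_covers_two r u1 u2 (P : pred T) : cov r u1 -> cov r u2 -> u1 < u2 ->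
  [forall y, cov r y ==> P y] = P u1 && P u2.
Proof.
move=> c1 c2 u12; apply/forallP/andP => [h|[P1 P2] y].
  by split; [move: (h u1); rewrite c1 | move: (h u2); rewrite c2].
apply/implyP => cry.
have := adjacent_neighbours (cov_adjacent c1) (cov_adjacent c2) u12 (cov_adjacent cry).
by case/orP=> /eqP->.
Qed.

Definition side a b x := if a < b then a < x else x < a.

Lemma side_lt a b x : a < b -> side a b x = (a < x).
Proof. by rewrite /side => ->. Qed.

Lemma side_gt a b x : b < a -> side a b x = (x < a).
Proof. by move=> ba; rewrite /side ltnNge (ltnW ba). Qed.

Lemma side_target a b : cov a b -> side a b b.
Proof. by move/cov_adjacent; rewrite /adjacent /side; case: ifP; lia. Qed.

Lemma side_source a b : ~~ side a b a.
Proof. by rewrite /side; case: ifP; rewrite ltnn. Qed.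

Lemma side_cov a b x z : cov a b -> side a b x -> cov x z -> side a b z.
Proof.
move=> cab sx cxz; apply: contraT => sz.
have [ex ez] : x = b /\ z = a.
  move: (cov_adjacent cab) (cov_adjacent cxz) sx sz; rewrite /adjacent /side.
  by case: ifP => ab h1 h2 h3 h4; split; apply: ord_inj; lia.
by rewrite ex ez (negbTE (cov_asym cab)) in cxz.
Qed.

Lemma side_fle a b x y : cov a b -> side a b x -> fle x y -> side a b y.
Proof.
move=> cab sx /connectP[p pth ->]; elim: p x pth sx => //= z p IH x /andP[cxz pth] sx.
exact: IH pth (side_cov cab sx cxz).
Qed.

Lemma fle_refl x : fle x x.
Proof. exact: connect0. Qed.

Lemma fle_trans x y z : fle x y -> fle y z -> fle x z.
Proof. exact: connect_trans. Qed.

Lemma cov_fle x y : cov x y -> fle x y.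
Proof. exact: connect1. Qed.

Lemma fle_first_cov x y : fle x y -> x != y -> exists2 z, cov x z & fle z y.
Proof.
move=> /connectP[[|z p] /= pth ->]; first by rewrite eqxx.
by case/andP: pth => cxz pth _; exists z => //; apply/connectP; exists p.
Qed.

Lemma fle_last_cov x y : fle x y -> x != y -> exists2 z, fle x z & cov z y.
Proof.
move=> /connectP[p pth ->]; case/lastP: p pth => [|p z]; first by rewrite eqxx.
rewrite rcons_path last_rcons => /andP[pth czy] _.
by exists (last x p) => //; apply/connectP; exists p.
Qed.

Lemma cov_nfle x y : cov x y -> ~~ fle y x.
Proof.
move=> cxy; apply/negP => lyx.
by have := side_fle cxy (side_target cxy) lyx; rewrite (negbTE (side_source _ _)).
Qed.

Lemma fle_anti x y : fle x y -> fle y x -> x = y.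
Proof.
move=> lxy lyx; apply/eqP; apply: contraT => nxy.
have [z cxz lzy] := fle_first_cov lxy nxy.
by have := cov_nfle cxz; rewrite (fle_trans lzy lyx).
Qed.

Lemma fle_left_cov a b x y : cov a b -> a < b -> fle x y -> y <= a -> x <= a.
Proof.
move=> cab ab lxy ya; rewrite leqNgt; apply/negP => ax.
have sx : side a b x by rewrite side_lt.
by have := side_fle cab sx lxy; rewrite side_lt //; lia.
Qed.

Lemma fle_right_cov a b x y : cov a b -> b < a -> fle x y -> a <= y -> a <= x.
Proof.
move=> cab ba lxy ay; rewrite leqNgt; apply/negP => xa.
have sx : side a b x by rewrite side_gt.
by have := side_fle cab sx lxy; rewrite side_gt //; lia.
Qed.

Lemma upper_cover_nfle_neighbour r y q : cov r y -> adjacent r q -> q != y -> ~~ fle y q.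
Proof.
move=> cry arq nqy; apply/negP => lyq.
have := side_fle cry (side_target cry) lyq.
move: (cov_adjacent cry) arq nqy; rewrite /adjacent /side -(inj_eq (@ord_inj _)).
by case: ifP; lia.
Qed.

Lemma neighbour_nfle_lower_cover q r z : cov q r -> adjacent r z -> z != q -> ~~ fle z q.
Proof.
move=> cqr arz nzq; apply/negP => lzq.
have sz : side q r z.
  move: (cov_adjacent cqr) arz nzq; rewrite /adjacent /side -(inj_eq (@ord_inj _)).
  by case: ifP; lia.
by have := side_fle cqr sz lzq; rewrite (negbTE (side_source _ _)).
Qed.

End FenceOrder.

Section OrderIdeals.
Variable alpha : seq nat.
Local Notation T := 'I_(fn alpha).
Implicit Types (p q r x y : T) (I J : {set T}).

Lemma in_maxE I q : is_ideal I ->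
  in_max I q = (q \in I) && [forall y, cov q y ==> (y \notin I)].
Proof.
move=> idI; rewrite /in_max; case qI: (q \in I) => //=.
apply/forallP/forallP => h y; apply/implyP.
- move=> cqy; apply: contraL (h y) => yI.
  by rewrite yI /flt (cov_neq cqy) (cov_fle cqy).
- move=> yI; apply/negP => /andP[nqy lqy].
  have [z cqz lzy] := fle_first_cov lqy nqy.
  by have := h z; rewrite cqz (idI z y yI lzy).
Qed.

Lemma in_min_complE I q : is_ideal I ->
  in_min_compl I q = (q \notin I) && [forall p, cov p q ==> (p \in I)].
Proof.
move=> idI; rewrite /in_min_compl; case qI: (q \in I) => //=.
apply/forallP/forallP => h p; apply/implyP.
- move=> cpq; apply/negPn/negP => pI.
  by have := h p; rewrite pI /flt (cov_neq cpq) (cov_fle cpq).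
- move=> pI; apply/negP => /andP[npq lpq].
  have [z lpz czq] := fle_last_cov lpq npq.
  by have /= zI := h z; rewrite czq in zI; rewrite (idI p z zI lpz) in pI.
Qed.

Definition status I r := (in_max I r, in_min_compl I r).

Definition near r y := (y == r) || adjacent r y.

Lemma near_bounds r y : near r y -> y <= r.+1 /\ r <= y.+1.
Proof. by rewrite /near /adjacent => /orP[/eqP->|]; lia. Qed.

Lemma status_local I J r : is_ideal I -> is_ideal J ->
  (forall y, near r y -> (y \in I) = (y \in J)) -> status I r = status J r.
Proof.
move=> idI idJ IJ; rewrite /status in_maxE // in_min_complE // in_maxE // in_min_complE //.
rewrite IJ ?/near ?eqxx //; congr (_ && _, _ && _); apply: eq_forallb => y.
  by case c: (cov r y) => //=; rewrite IJ // /near (cov_adjacent c) orbT.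
by case c: (cov y r) => //=; rewrite IJ // /near (lower_cov_adjacent c) orbT.
Qed.

Lemma ideal_set0 : is_ideal (set0 : {set T}).
Proof. by move=> x y; rewrite inE. Qed.

Lemma ideal_setU I J : is_ideal I -> is_ideal J -> is_ideal (I :|: J).
Proof.
move=> idI idJ x y; rewrite !inE => /orP[yI|yJ] lxy.
  by rewrite (idI x y yI lxy).
by rewrite (idJ x y yJ lxy) orbT.
Qed.

Definition down q : {set T} := [set x | fle x q].
Definition sdown q : {set T} := down q :\ q.

Lemma in_down q x : (x \in down q) = fle x q.
Proof. by rewrite inE. Qed.

Lemma in_sdown q x : (x \in sdown q) = (x != q) && fle x q.
Proof. by rewrite !inE. Qed.

Lemma down_ideal q : is_ideal (down q).
Proof. by move=> x y; rewrite !in_down => lyq lxy; apply: fle_trans lxy lyq. Qed.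

Lemma sdown_ideal q : is_ideal (sdown q).
Proof.
move=> x y; rewrite !in_sdown => /andP[nyq lyq] lxy; rewrite (fle_trans lxy lyq) andbT.
by apply: contraNneq nyq => exq; apply/eqP/fle_anti => //; rewrite -exq.
Qed.

Lemma status_down_self q : status (down q) q = (true, false).
Proof.
rewrite /status in_maxE ?in_min_complE ?in_down ?fle_refl; try exact: down_ideal.
by congr (_, _); apply/forallP => y; apply/implyP => /cov_nfle; rewrite in_down.
Qed.

Lemma status_sdown_self q : status (sdown q) q = (false, true).
Proof.
rewrite /status in_maxE ?in_min_complE ?in_sdown ?eqxx; try exact: sdown_ideal.
congr (_, _); apply/forallP => p; apply/implyP => cpq.
by rewrite in_sdown (cov_neq cpq) (cov_fle cpq).
Qed.

Lemma status_down_lower q r : cov r q -> status (down q) r = (false, false).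
Proof.
move=> crq; rewrite /status in_maxE ?in_min_complE; try exact: down_ideal.
rewrite in_down (cov_fle crq) /=; congr (_, _).
by apply/negP => /forallP/(_ q); rewrite crq in_down fle_refl.
Qed.

Lemma status_sdown_lower q r : cov r q -> status (sdown q) r = (true, false).
Proof.
move=> crq; rewrite /status in_maxE ?in_min_complE; try exact: sdown_ideal.
rewrite in_sdown (cov_neq crq) (cov_fle crq) /=; congr (_, _).
apply/forallP => y; apply/implyP => cry; rewrite in_sdown negb_and negbK.
case: (eqVneq y q) => //= nyq.
by apply: upper_cover_nfle_neighbour cry (cov_adjacent crq) _; rewrite eq_sym.
Qed.

Lemma status_down_upper q r : cov q r ->
  status (down q) r = (false, [forall z, cov z r ==> (z == q)]).
Proof.
move=> cqr; rewrite /status in_maxE ?in_min_complE; try exact: down_ideal.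
rewrite in_down (negbTE (cov_nfle cqr)) /=; congr (_, _).
apply: eq_forallb => z; case czr: (cov z r) => //=; rewrite in_down.
case: (eqVneq z q) => [->|nzq]; first exact: fle_refl.
exact/negbTE/(neighbour_nfle_lower_cover cqr (lower_cov_adjacent czr) nzq).
Qed.

Lemma status_sdown_upper q r : cov q r -> status (sdown q) r = (false, false).
Proof.
move=> cqr; rewrite /status in_maxE ?in_min_complE; try exact: sdown_ideal.
rewrite in_sdown (negbTE (cov_nfle cqr)) andbF /=; congr (_, _).
by apply/negP => /forallP/(_ q); rewrite cqr in_sdown eqxx.
Qed.

Lemma status_down_far q r : ~~ near r q -> status (down q) r = status (sdown q) r.
Proof.
move=> far; apply: status_local; [exact: down_ideal|exact: sdown_ideal|].
move=> y nry; rewrite in_sdown in_down; case: eqVneq => // eyq.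
by rewrite -eyq nry in far.
Qed.

End OrderIdeals.

Section FenceShape.
Variable alpha : seq nat.
Hypothesis fence_alpha : is_fence_comp alpha.
Local Notation t := (tlen alpha).
Local Notation a := (apart alpha).
Local Notation n := (fn alpha).
Local Notation T := 'I_(fn alpha).
Local Notation up := (up alpha).
Implicit Types q r : T.

Lemma apartS k : a k.+1 = a k + nth 0 alpha k.
Proof. by rewrite /apart big_ord_recr. Qed.

Lemma apart_ltn i j : i < j -> j <= t -> a i < a j.
Proof.
have [_ /all_nthP pos _ _] := fence_alpha.
have inc : {in [pred k | k <= t] &, {homo a : i j / i < j}}.
  apply: homo_ltn_in => [y x z|i0 j0 _ jt k /andP[_ kj]|k _ kt].
  - exact: ltn_trans.
  - by rewrite inE (leq_trans (ltnW kj)).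
  - by rewrite apartS -addn1 leq_add2l pos.
by move=> ij jt; apply: inc => //=; apply: leq_trans jt; apply: ltnW.
Qed.

Lemma tlen_ge2 : 2 <= t.
Proof. by case: fence_alpha. Qed.

Lemma apart1_ge2 : 2 <= a 1.
Proof. by rewrite apartS /apart big_ord0 nth0; case: fence_alpha. Qed.

Lemma apart_last_gap : a t.-1 + 2 <= a t.
Proof.
have tS : t = t.-1.+1 by have := tlen_ge2; lia.
by rewrite [in X in _ <= X]tS apartS leq_add2l nth_last; case: fence_alpha.
Qed.

Definition shared_index u := has (fun i => u.+1 == a i) (iota 1 t.-1).

Lemma shared_index_bounds u : shared_index u -> 0 < u /\ u.+1 < n.
Proof.
case/hasP => i; rewrite mem_iota => /andP[i1 it] /eqP ui.
have t2 := tlen_ge2.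
have a1i : a 1 <= a i.
  case: (ltngtP 1 i) => [h|h|<-] //; last by lia.
  by apply/ltnW/apart_ltn => //; lia.
have ait : a i <= a t.-1.
  case: (ltngtP i t.-1) => [h|h|->] //; last by lia.
  by apply/ltnW/apart_ltn => //; lia.
by have := apart1_ge2; have := apart_last_gap; rewrite /fn; lia.
Qed.

Lemma count_apart_eq u :
  count (fun k => a k == u.+1) (iota 1 t.-1) = shared_index u.
Proof.
rewrite /shared_index -(count_map a (pred1 u.+1)) count_uniq_mem.
  by congr nat_of_bool; apply/mapP/hasP => -[k kt ek]; exists k => //; apply/eqP.
rewrite map_inj_in_uniq ?iota_uniq // => i j; rewrite !mem_iota => /andP[_ it] /andP[_ jt] aij.
have [it' jt'] : i <= t /\ j <= t by have := tlen_ge2; lia.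
case: (ltngtP i j) => // ij.
  by have := apart_ltn ij jt'; rewrite aij ltnn.
by have := apart_ltn ij it'; rewrite aij ltnn.
Qed.

(* From u to u + 1, [seg] grows by the number of partial sums a_i equal to
   u + 1, and a_t = n + 1 is out of reach. *)
Lemma up_succ u : u < n -> up u.+1 = up u (+) shared_index u.
Proof.
move=> un; rewrite /up /seg /=.
have tS : t = t.-1 + 1 by have := tlen_ge2; lia.
have split_le s : count (fun k => a k <= u.+1) s =
    count (fun k => a k <= u) s + count (fun k => a k == u.+1) s.
  by elim: s => //= k s ->; case: (ltngtP (a k) u.+1); lia.
rewrite split_le {2}tS iotaD count_cat /= addnA.
have -> : (a (1 + t.-1) == u.+1) = false.
  by apply/negbTE; rewrite addnC -tS; move: un; rewrite /fn; lia.
by rewrite addn0 count_apart_eq !oddD; case: (shared_index u); case: (odd _).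
Qed.

Lemma sharedE r : shared r = [&& 0 < r, r.+1 < n & up r != up r.+1].
Proof.
have -> : shared r = shared_index r by [].
rewrite (up_succ (ltn_ord r)).
case: (boolP (shared_index r)) => [/shared_index_bounds [-> ->]|_].
  by case: (up r).
by rewrite addbF eqxx !andbF.
Qed.

Lemma shared_peak_or_valley r : shared r -> exists u1 u2 : T,
  u1 < u2 /\ ((cov u1 r && cov u2 r) || (cov r u1 && cov r u2)).
Proof.
rewrite sharedE => /and3P[r0 rn ur].
have u1n : r.-1 < n by have := ltn_ord r; lia.
exists (Ordinal u1n), (Ordinal rn); split; first by rewrite /=; lia.
have [-> ->] := @cov_consecutive alpha (Ordinal u1n) r (esym (prednK r0)).
have [-> ->] := @cov_consecutive alpha r (Ordinal rn) erefl.
by move: ur; rewrite /=; case: (up r); case: (up r.+1).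
Qed.

Lemma lower_covers_shared u1 u2 r : cov u1 r -> cov u2 r -> u1 < u2 -> shared r.
Proof.
move=> c1 c2 u12.
have [e1 e2] := neighbours_lt (lower_cov_adjacent c1) (lower_cov_adjacent c2) u12.
have [up_r _] := cov_consecutive (esym e1).
have [_ up_r1] := cov_consecutive e2.
rewrite sharedE.
have -> : 0 < r by rewrite -e1.
have -> : r.+1 < n by rewrite -e2 ltn_ord.
by move: c2; rewrite up_r1 -up_r c1 -e2; case: (up u2).
Qed.

Lemma shared_cov_valley r q : shared r -> cov r q ->
  exists u1 u2 : T, [/\ u1 < u2, cov r u1 & cov r u2].
Proof.
move=> /shared_peak_or_valley [u1 [u2 [u12 /orP[]/andP[c1 c2]]]] crq; last by exists u1, u2.
have := adjacent_neighbours (lower_cov_adjacent c1) (lower_cov_adjacent c2) u12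
  (cov_adjacent crq).
by case/orP=> /eqP eq; [have := cov_asym c1 | have := cov_asym c2]; rewrite -eq crq.
Qed.

Lemma unique_lower_cover q r : cov q r -> [forall z, cov z r ==> (z == q)] = ~~ shared r.
Proof.
move=> cqr; apply/forallP/idP => [uniq|nsh z].
  apply/negP => /shared_peak_or_valley [u1 [u2 [u12 /orP[]/andP[c1 c2]]]].
    have /implyP/(_ c1)/eqP e1 := uniq u1; have /implyP/(_ c2)/eqP e2 := uniq u2.
    by move: u12; rewrite e1 e2 ltnn.
  have := adjacent_neighbours (cov_adjacent c1) (cov_adjacent c2) u12 (lower_cov_adjacent cqr).
  by case/orP=> /eqP eq; [have := cov_asym c1 | have := cov_asym c2]; rewrite -eq cqr.
apply/implyP => czr; case: (eqVneq z q) => // nzq.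
case: (ltngtP z q) => [zq|qz|/ord_inj ezq]; last by rewrite ezq eqxx in nzq.
  by rewrite (lower_covers_shared czr cqr zq) in nsh.
by rewrite (lower_covers_shared cqr czr qz) in nsh.
Qed.

End FenceShape.

Section Combinations.
Variables (alpha : seq nat) (R : realType).
Local Notation T := 'I_(fn alpha).
Local Open Scope ring_scope.
Implicit Types (q r : T) (I : {set T}).

Lemma chiE I r : chi R r I = (status I r).1%:R.
Proof. by rewrite /chi /status /=; case: (in_max I r). Qed.

Lemma TogE I r : Tog R r I = (status I r).2%:R - (status I r).1%:R.
Proof.
rewrite /Tog /status /=; case: (boolP (in_min_compl I r)) => [/andP[rI _]|_].
  by rewrite /in_max (negbTE rI) subr0.
by case: ifP => _ /=; ring.
Qed.

Lemma chi_notin I r : r \notin I -> chi R r I = 0.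
Proof. by rewrite chiE /= /in_max => /negbTE->. Qed.

Lemma chi_in I r : is_ideal I -> r \in I ->
  chi R r I = [forall y, cov r y ==> (y \notin I)]%:R.
Proof. by move=> idI rI; rewrite chiE /= in_maxE // rI. Qed.

Lemma Tog_in I r : r \in I -> Tog R r I = - chi R r I.
Proof. by move=> rI; rewrite TogE chiE /= /in_min_compl rI sub0r. Qed.

Lemma Tog_notin I r : is_ideal I -> r \notin I ->
  Tog R r I = [forall p, cov p r ==> (p \in I)]%:R.
Proof.
by move=> idI rI; rewrite TogE /= in_min_complE // rI /in_max (negbTE rI) subr0.
Qed.

Definition lincomb (w : seq (R * {set T})) (g : {set T} -> R) : R :=
  \sum_(p <- w) p.1 * g p.2.

Lemma lincomb_sum (P : pred T) (a : T -> R) (h : T -> {set T} -> R) w :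
  \sum_(q | P q) a q * lincomb w (h q) = lincomb w (fun I => \sum_(q | P q) a q * h q I).
Proof.
rewrite /lincomb; under eq_bigr do rewrite mulr_sumr.
rewrite exchange_big /=; apply: eq_bigr => p _; rewrite mulr_sumr.
by apply: eq_bigr => q _; rewrite mulrCA.
Qed.

Definition rectangle L0 L1 R0 R1 : seq (R * {set T}) :=
  [:: (1, L1 :|: R1); (-1, L1 :|: R0); (-1, L0 :|: R1); (1, L0 :|: R0)].

Lemma rectangle_weights L0 L1 R0 R1 : \sum_(p <- rectangle L0 L1 R0 R1) p.1 = 0.
Proof. by rewrite !big_cons big_nil /=; ring. Qed.

Lemma lincomb_rectangle L0 L1 R0 R1 g : lincomb (rectangle L0 L1 R0 R1) g =
  g (L1 :|: R1) - g (L1 :|: R0) - g (L0 :|: R1) + g (L0 :|: R0).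
Proof. by rewrite /lincomb !big_cons big_nil /=; ring. Qed.

Lemma chi_down q r : chi R r (down q) = (r == q)%:R.
Proof.
case: (eqVneq r q) => [->|nrq]; first by rewrite chiE status_down_self.
case: (boolP (r \in down q)) => [rq|]; last by move/chi_notin.
rewrite (chi_in (@down_ideal _ q) rq).
have [z crz lzq] := fle_first_cov (etrans (esym (in_down q r)) rq) nrq.
suff -> : [forall y, cov r y ==> (y \notin down q)] = false by [].
by apply/negbTE/negP => /forallP/(_ z); rewrite crz in_down lzq.
Qed.

Lemma down_sdown_diff q r :
  chi R r (down q) - chi R r (sdown q) = (r == q)%:R - (cov r q)%:R /\
  Tog R r (down q) - Tog R r (sdown q) =
    (cov r q)%:R - 2 * (r == q)%:R + (cov q r && [forall z, cov z r ==> (z == q)])%:R.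
Proof.
rewrite !chiE !TogE; case: (eqVneq r q) => [->|nrq].
  have cqq : cov q q = false by apply/negbTE/negP => /cov_neq; rewrite eqxx.
  by rewrite status_down_self status_sdown_self cqq /=; split; ring.
case crq: (cov r q).
  rewrite status_down_lower // status_sdown_lower // (negbTE (cov_asym crq)) /=.
  by split; ring.
case cqr: (cov q r).
  by rewrite status_down_upper // status_sdown_upper //=; split; ring.
have far : ~~ near r q.
  by rewrite /near eq_sym (negbTE nrq); apply/negP => /adjacent_cov; rewrite crq cqr.
by rewrite status_down_far //=; split; ring.
Qed.

Section Identity.
Variables (b cq : T -> R) (c : R).
Hypothesis Hf : forall I, is_ideal I ->
  \sum_(q | shared q) b q * chi R q I = c + \sum_q cq q * Tog R q I.

Lemma lincomb_identity w : (forall p, p \in w -> is_ideal p.2) -> \sum_(p <- w) p.1 = 0 ->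
  \sum_(q | shared q) b q * lincomb w (chi R q) = \sum_q cq q * lincomb w (Tog R q).
Proof.
move=> idw w0; rewrite !lincomb_sum /lincomb.
transitivity (\sum_(p <- w) p.1 * (c + \sum_q cq q * Tog R q p.2)).
  by rewrite !big_seq; apply: eq_bigr => p /idw idp; rewrite Hf.
by under eq_bigr do rewrite mulrDr; rewrite big_split /= -mulr_suml w0 mul0r add0r.
Qed.

Section Rectangle.
Variables (m : T) (L0 L1 R0 R1 : {set T}).
Hypotheses (idL0 : is_ideal L0) (idL1 : is_ideal L1).
Hypotheses (idR0 : is_ideal R0) (idR1 : is_ideal R1).
Hypothesis left_of_m : forall x, x \in L0 :|: L1 -> (x <= m)%N.
Hypothesis right_of_m : forall x, x \in R0 :|: R1 -> (m <= x)%N.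
Hypotheses (m_L : (m \in L0) = (m \in L1)) (m_R : (m \in R0) = (m \in R1)).

(* For r < m the neighbourhood of r meets R0 and R1 at most in m, where they
   agree, so the status of r in L :|: Rj does not depend on j; symmetrically
   for r > m. *)
Lemma lincomb_rectangle_local (g : {set T} -> R) (G : bool * bool -> R) r : r != m ->
  (forall I, g I = G (status I r)) -> lincomb (rectangle L0 L1 R0 R1) g = 0.
Proof.
move=> nrm gG; rewrite lincomb_rectangle !gG.
have idU := ideal_setU.
case: (ltngtP r m) => [rm|mr|/ord_inj erm]; last by rewrite erm eqxx in nrm.
- have eqR L : is_ideal L -> status (L :|: R1) r = status (L :|: R0) r.
    move=> idL; apply: status_local => [||y /near_bounds [yr _]]; try exact: idU.
    rewrite !inE; congr (_ || _).
    case: (boolP (y \in R0 :|: R1)) => [/right_of_m my|].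
      by have -> : y = m by apply: ord_inj; lia.
    by rewrite inE negb_or => /andP[/negbTE-> /negbTE->].
  by rewrite !eqR //; ring.
- have eqL Rx : is_ideal Rx -> status (L1 :|: Rx) r = status (L0 :|: Rx) r.
    move=> idRx; apply: status_local => [||y /near_bounds [_ ry]]; try exact: idU.
    rewrite !inE; congr (_ || _).
    case: (boolP (y \in L0 :|: L1)) => [/left_of_m ym|].
      by have -> : y = m by apply: ord_inj; lia.
    by rewrite inE negb_or => /andP[/negbTE-> /negbTE->].
  by rewrite !eqL //; ring.
Qed.

Lemma rectangle_identity :
  (if shared m then b m else 0) * lincomb (rectangle L0 L1 R0 R1) (chi R m) =
  cq m * lincomb (rectangle L0 L1 R0 R1) (Tog R m).
Proof.
have idw p : p \in rectangle L0 L1 R0 R1 -> is_ideal p.2.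
  by rewrite !inE => /or4P[]/eqP-> /=; apply: ideal_setU.
have := lincomb_identity idw (rectangle_weights _ _ _ _).
rewrite big_mkcond (bigD1 m) //= big1 ?addr0; last first.
  move=> r nrm; case: ifP => // _.
  rewrite (lincomb_rectangle_local (G := fun s => s.1%:R) nrm) ?mulr0 //.
  by move=> I; rewrite chiE.
rewrite (bigD1 m) //= big1 ?addr0; last first.
  move=> r nrm; rewrite (lincomb_rectangle_local (G := fun s => s.2%:R - s.1%:R) nrm) ?mulr0 //.
  by move=> I; rewrite TogE.
by move=> <-; case: ifP; rewrite ?mul0r.
Qed.

End Rectangle.

Lemma cq_peak r u1 u2 : cov u1 r -> cov u2 r -> (u1 < u2)%N -> cq r = 0.
Proof.
move=> c1 c2 u12.
have [e1 e2] := neighbours_lt (lower_cov_adjacent c1) (lower_cov_adjacent c2) u12.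
have in1 x : x \in down u1 -> (x <= u1)%N.
  by rewrite in_down => l; apply: fle_left_cov c1 _ l _; lia.
have in2 x : x \in down u2 -> (u2 <= x)%N.
  by rewrite in_down => l; apply: fle_right_cov c2 _ l _; lia.
have r1 : fle r u1 = false by apply/negP; rewrite -in_down => /in1; lia.
have r2 : fle r u2 = false by apply/negP; rewrite -in_down => /in2; lia.
have f21 : fle u2 u1 = false by apply/negP; rewrite -in_down => /in1; lia.
have f12 : fle u1 u2 = false by apply/negP; rewrite -in_down => /in2; lia.
have hL x : x \in set0 :|: down u1 -> (x <= r)%N by rewrite set0U => /in1; lia.
have hR x : x \in set0 :|: down u2 -> (r <= x)%N by rewrite set0U => /in2; lia.
have mL : (r \in set0) = (r \in down u1) by rewrite !inE r1.
have mR : (r \in set0) = (r \in down u2) by rewrite !inE r2.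
have := rectangle_identity (@ideal_set0 alpha) (@down_ideal _ u1) (@ideal_set0 alpha)
  (@down_ideal _ u2) hL hR mL mR.
have Tog_r I : is_ideal I -> r \notin I -> Tog R r I = ((u1 \in I) && (u2 \in I))%:R.
  by move=> idI rI; rewrite Tog_notin // (lower_covers_two _ c1 c2 u12).
have id12 := ideal_setU (@down_ideal _ u1) (@down_ideal _ u2).
rewrite !lincomb_rectangle !set0U setU0 !chi_notin ?inE ?r1 ?r2 //.
rewrite !Tog_r ?inE ?r1 ?r2 //; try exact: down_ideal; try exact: ideal_set0.
by rewrite !fle_refl f12 f21 /=; lra.
Qed.

Lemma b_valley r u1 u2 : cov r u1 -> cov r u2 -> (u1 < u2)%N ->
  (if shared r then b r else 0) = - cq r.
Proof.
move=> c1 c2 u12.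
have [e1 e2] := neighbours_lt (cov_adjacent c1) (cov_adjacent c2) u12.
have in1 x : fle x u1 -> (x <= r)%N by move=> l; apply: fle_left_cov c2 _ l _; lia.
have in2 x : fle x u2 -> (r <= x)%N by move=> l; apply: fle_right_cov c1 _ l _; lia.
have f21 : fle u2 u1 = false by apply/negP => /in1; lia.
have f12 : fle u1 u2 = false by apply/negP => /in2; lia.
have hL x : x \in sdown u1 :|: down u1 -> (x <= r)%N.
  by rewrite inE in_sdown in_down => /orP[/andP[_]|]; apply: in1.
have hR x : x \in sdown u2 :|: down u2 -> (r <= x)%N.
  by rewrite inE in_sdown in_down => /orP[/andP[_]|]; apply: in2.
have m_sdown u : cov r u -> (r \in sdown u) = (r \in down u).
  by move=> cru; rewrite in_sdown in_down (cov_neq cru).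
have := rectangle_identity (@sdown_ideal _ u1) (@down_ideal _ u1) (@sdown_ideal _ u2)
  (@down_ideal _ u2) hL hR (m_sdown _ c1) (m_sdown _ c2).
have chi_r I : is_ideal I -> r \in I -> chi R r I = ((u1 \notin I) && (u2 \notin I))%:R.
  by move=> idI rI; rewrite chi_in // (upper_covers_two _ c1 c2 u12).
have idU X Y : is_ideal X -> is_ideal Y -> is_ideal (X :|: Y) by apply: ideal_setU.
rewrite !lincomb_rectangle !Tog_in ?inE ?(cov_neq c1) ?(cov_fle c1) //.
rewrite !chi_r ?inE ?(cov_neq c1) ?(cov_fle c1) //;
  try by apply: idU; [exact: sdown_ideal || exact: down_ideal..].
by rewrite !eqxx !fle_refl f12 f21 /= !andbF /=; lra.
Qed.

Lemma down_sdown_identity q :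
  \sum_(r | shared r) b r * ((r == q)%:R - (cov r q)%:R) =
  \sum_r cq r * ((cov r q)%:R - 2 * (r == q)%:R
                  + (cov q r && [forall z, cov z r ==> (z == q)])%:R).
Proof.
pose w : seq (R * {set T}) := [:: (1, down q); (-1, sdown q)].
have lincombE g : lincomb w g = g (down q) - g (sdown q) by rewrite /lincomb !big_cons big_nil /=; ring.
have idw p : p \in w -> is_ideal p.2.
  by rewrite !inE => /orP[]/eqP-> /=; [exact: down_ideal | exact: sdown_ideal].
have w0 : \sum_(p <- w) p.1 = 0 by rewrite !big_cons big_nil /=; ring.
transitivity (\sum_(r | shared r) b r * lincomb w (chi R r)).
  by apply: eq_bigr => r _; rewrite lincombE (down_sdown_diff q r).1.
by rewrite (lincomb_identity idw w0); apply: eq_bigr => r _; rewrite lincombE (down_sdown_diff q r).2.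
Qed.

Definition free_cq r := if shared r then 0 else cq r.

Hypothesis fence_alpha : is_fence_comp alpha.

Lemma neighbour_balance q :
  (if shared q then b q else 0) + 2 * cq q = \sum_(r | adjacent r q) free_cq r.
Proof.
set X := _ + _.
have pointwise r :
  (if shared r then b r * ((r == q)%:R - (cov r q)%:R) else 0) -
  cq r * ((cov r q)%:R - 2 * (r == q)%:R + (cov q r && [forall z, cov z r ==> (z == q)])%:R) =
  (if r == q then X else 0) - (if adjacent r q then free_cq r else 0).
  case: (eqVneq r q) => [->|nrq].
    have cqq : cov q q = false by apply/negbTE/negP => /cov_neq; rewrite eqxx.
    have aqq : adjacent q q = false by rewrite /adjacent; lia.
    by rewrite cqq aqq /X /=; case: (shared q); ring.
  case crq: (cov r q).
    (* a shared element below q is a valley, where b_r = - c_r *)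
    rewrite (negbTE (cov_asym crq)) (cov_adjacent crq) /free_cq.
    case: ifP => shr /=; last ring.
    have [u1 [u2 [u12 c1 c2]]] := shared_cov_valley fence_alpha shr crq.
    by have := b_valley c1 c2 u12; rewrite shr => ->; ring.
  case cqr: (cov q r).
    rewrite (unique_lower_cover fence_alpha cqr) (lower_cov_adjacent cqr) /free_cq /=.
    by case: (shared r) => /=; ring.
  have -> : adjacent r q = false by apply/negP => /adjacent_cov; rewrite crq cqr.
  by case: (shared r) => /=; ring.
have := down_sdown_identity q; move/eqP; rewrite -subr_eq0 big_mkcond -sumrB.
rewrite (eq_bigr _ (fun r _ => pointwise r)) sumrB -!big_mkcond big_pred1_eq subr_eq0.
by move/eqP.
Qed.

End Identity.

End Combinations.

Section DirichletEnergy.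
Variable R : realType.
Local Open Scope ring_scope.

Definition prev (C : nat -> R) j := if j is k.+1 then C k else 0.

Lemma energy_sum (C : nat -> R) m :
  \sum_(j < m) C j * (2 * C j - prev C j - C j.+1) =
  \sum_(j < m) (C j - prev C j) ^+ 2 + prev C m ^+ 2 - prev C m * C m.
Proof.
elim: m => [|m IH]; first by rewrite !big_ord0 /=; ring.
by rewrite !big_ord_recr /= IH /=; ring.
Qed.

Lemma harmonic_eq0 (C : nat -> R) m :
  (forall j, (m <= j)%N -> C j = 0) ->
  (forall j, (j < m)%N -> C j * (2 * C j - prev C j - C j.+1) = 0) ->
  forall j, C j = 0.
Proof.
move=> out harm.
have /eqP : \sum_(j < m) (C j - prev C j) ^+ 2 + prev C m ^+ 2 = 0.
  have := energy_sum C m; rewrite big1 ?out // => [|j _]; last exact: harm.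
  by rewrite mulr0 subr0 => <-.
have sum_ge0 : 0 <= \sum_(j < m) (C j - prev C j) ^+ 2.
  by apply/sumr_ge0 => j _; apply: sqr_ge0.
rewrite paddr_eq0 ?sqr_ge0 // => /andP[/eqP sq0 _].
have step (j : 'I_m) : C j = prev C j.
  have /(_ j isT)/eqP := @psumr_eq0P _ _ xpredT (fun i : 'I_m => (C i - prev C i) ^+ 2)
    (fun i _ => sqr_ge0 _) sq0.
  by rewrite sqrf_eq0 subr_eq0 => /eqP.
elim=> [|j IH].
  by have [m0|/out//] := ltnP 0 m; rewrite (step (Ordinal m0)).
by have [jm|/out//] := ltnP j.+1 m; rewrite (step (Ordinal jm)) /= IH.
Qed.

End DirichletEnergy.

Section Vanishing.
Variables (alpha : seq nat) (R : realType).
Hypothesis fence_alpha : is_fence_comp alpha.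
Local Notation n := (fn alpha).
Local Notation T := 'I_(fn alpha).
Local Open Scope ring_scope.

Definition extend (G : T -> R) (k : nat) : R := if insub k is Some x then G x else 0.

Lemma extend_ord G (r : T) : extend G r = G r.
Proof. by rewrite /extend valK. Qed.

Lemma extend_out G k : (n <= k)%N -> extend G k = 0.
Proof. by rewrite /extend; case: insubP => // x; rewrite ltnNge => /negbTE->. Qed.

Lemma sum_eq_index G k : \sum_(r : T | r == k :> nat) G r = extend G k.
Proof.
rewrite /extend; case: insubP => [x _ xk|kn].
  by rewrite (big_pred1 x) // => r; rewrite -xk (inj_eq (@ord_inj _)).
by rewrite big_pred0 // => r; apply: contraNF kn => /eqP <-.
Qed.

Lemma sum_adjacent G (q : T) :
  \sum_(r | adjacent r q) G r = prev (extend G) q + extend G q.+1.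
Proof.
rewrite (bigID (fun r : T => r == q.+1 :> nat)) /= addrC -sum_eq_index; congr (_ + _).
  case eq: (q : nat) => [|k] /=.
    by rewrite big_pred0 // => r; rewrite /adjacent eq; lia.
  by rewrite -sum_eq_index; apply: eq_bigl => r; rewrite /adjacent eq; lia.
by apply: eq_bigl => r; rewrite /adjacent; lia.
Qed.

Variables (b cq : T -> R) (c : R).
Hypothesis Hf : forall I, is_ideal I ->
  \sum_(q | shared q) b q * chi R q I = c + \sum_q cq q * Tog R q I.

Lemma free_cq_eq0 r : free_cq cq r = 0.
Proof.
pose C := extend (free_cq cq).
suff C0 j : C j = 0 by have := C0 r; rewrite /C extend_ord.
apply: (@harmonic_eq0 _ C n) => k kn; first exact: extend_out.
have -> : k = Ordinal kn by [].
rewrite /C extend_ord /free_cq; case: ifP => sh; first by rewrite mul0r.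
have := neighbour_balance Hf fence_alpha (Ordinal kn).
by rewrite sh add0r sum_adjacent -/C => ->; ring.
Qed.

Lemma cq_eq0 r : cq r = 0.
Proof.
case sh: (shared r); last by have := free_cq_eq0 r; rewrite /free_cq sh.
have [u1 [u2 [u12 /orP[]/andP[c1 c2]]]] := shared_peak_or_valley fence_alpha sh.
  exact: (cq_peak Hf c1 c2 u12).
have := neighbour_balance Hf fence_alpha r; rewrite big1 => [|z _]; last exact: free_cq_eq0.
by rewrite (b_valley Hf c1 c2 u12); lra.
Qed.

Lemma c_eq0 : c = 0.
Proof.
have := Hf (@ideal_set0 alpha).
rewrite big1 => [|q _]; last by rewrite chi_notin ?inE // mulr0.
by rewrite big1 ?addr0 // => q _; rewrite cq_eq0 mul0r.
Qed.

End Vanishing.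

Local Open Scope ring_scope.

Theorem lemma3p4 (R : realType) (alpha : seq nat) :
  is_fence_comp alpha ->
  X_lin_indep alpha R /\
  (forall f : {set 'I_(fn alpha)} -> R,
     in_span_X f -> in_AT f -> forall I, is_ideal I -> f I = 0).
Proof.
move=> fence_alpha; split.
  move=> b hb q shq; have := hb _ (@down_ideal alpha q).
  rewrite (bigD1 q) //= chi_down eqxx big1 ?addr0 ?mulr1 // => r /andP[_ nrq].
  by rewrite chi_down (negbTE nrq) mulr0.
move=> f [b hb] [_ [c [cq hc]]] I idI.
have Hf J : is_ideal J -> \sum_(q | shared q) b q * chi R q J = c + \sum_q cq q * Tog R q J.
  by move=> idJ; rewrite -hb // hc.
rewrite hc // (c_eq0 fence_alpha Hf) add0r big1 // => q _.
by rewrite (cq_eq0 fence_alpha Hf) mul0r.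
Qed.
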